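(* For every integer $r\ge1$, for both choices of sign, and all real $x$, $$\operatorname{sech}^{2r+1}x=\frac{(\pm1)^{r+1}}{r\,(2r-1)!!}\Big(\frac{d}{d\sinh x}\Big)^{r+1}e^{\pm rx},$$ where $\frac{d}{d\sinh x}$ denotes differentiation with respect to the variable $u=\sinh x$ (i.e. $e^{\pm rx}$ is regarded as the function $(\sqrt{1+u^2}\pm u)^{r}$ of $u$, differentiated $r+1$ times in $u$, and then evaluated at $u=\sinh x$), and $(2r-1)!!=1\cdot3\cdots(2r-1)$. *)

From Stdlib Require Import Reals.
Open Scope R_scope.

Fixpoint dfact (n : nat) : nat :=
  match n with
  | O => 1%nat
  | S O => 1%nat
  | S (S m as k) => (S k * dfact m)%nat
  end.

Definition sech (x : R) : R := / cosh x.

Inductive nth_deriv : nat -> (R -> R) -> (R -> R) -> Prop :=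
  | nth_deriv_O : forall f, nth_deriv 0 f f
  | nth_deriv_S : forall n f f1 g,
      (forall u, derivable_pt_lim f u (f1 u)) ->
      nth_deriv n f1 g -> nth_deriv (S n) f g.

From Stdlib Require Import Reals Lra Lia FunctionalExtensionality.
Open Scope R_scope.

(* Write w u = sqrt (1 + u^2) and F u = (w u + s u)^r with s = 1 or s = -1.
   Since F' = r s F / w, the function F solves the Chebyshev-type equation
   (1 + u^2) y'' + u y' - r^2 y = 0.  Differentiating it k times gives
     (1 + u^2) y^(k+2) = (r^2 - k^2) y^(k) - (2k+1) u y^(k+1),
   so the derivatives D k = F^(k) are generated by this recurrence, and by
   uniqueness of higher derivatives D (r+1) is the only possible g.
   For k = r the recurrence says (1 + u^2) D_(r+2) = -(2r+1) u D_(r+1), i.e.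
   D_(r+1) * w^(2r+1) has zero derivative, so it is constant, equal to D_(r+1)(0).
   At u = 0 the recurrence reads D_(k+2)(0) = (r-k)(r+k) D_k(0); from
   D_0(0) = 1 and D_1(0) = r s this gives D_(r+1)(0) = s^(r+1) r (2r-1)!!.
   Substituting u = sinh x, where w (sinh x) = cosh x, yields the formula. *)

(* Derivative rules for [derivable_pt_lim] on explicit lambda terms, so that
   they apply directly to goals written with binders. *)
Lemma dpl_eq f u l l' : l = l' -> derivable_pt_lim f u l -> derivable_pt_lim f u l'.
Proof. now intros ->. Qed.

Lemma dpl_plus f g f' g' u :
  derivable_pt_lim f u f' -> derivable_pt_lim g u g' ->
  derivable_pt_lim (fun y => f y + g y) u (f' + g').
Proof. apply derivable_pt_lim_plus. Qed.

Lemma dpl_minus f g f' g' u :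
  derivable_pt_lim f u f' -> derivable_pt_lim g u g' ->
  derivable_pt_lim (fun y => f y - g y) u (f' - g').
Proof. apply derivable_pt_lim_minus. Qed.

Lemma dpl_mult f g f' g' u :
  derivable_pt_lim f u f' -> derivable_pt_lim g u g' ->
  derivable_pt_lim (fun y => f y * g y) u (f' * g u + f u * g').
Proof. apply derivable_pt_lim_mult. Qed.

Lemma dpl_div f g f' g' u :
  derivable_pt_lim f u f' -> derivable_pt_lim g u g' -> g u <> 0 ->
  derivable_pt_lim (fun y => f y / g y) u ((f' * g u - g' * f u) / g u ^ 2).
Proof.
  intros Hf Hg Hnz. rewrite <- Rsqr_pow2. exact (derivable_pt_lim_div f g u f' g' Hf Hg Hnz).
Qed.

Lemma dpl_pow f f' n u :
  derivable_pt_lim f u f' ->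
  derivable_pt_lim (fun y => f y ^ n) u (INR n * f u ^ pred n * f').
Proof.
  intros Hf. exact (derivable_pt_lim_comp f (fun y => y ^ n) u f' _ Hf (derivable_pt_lim_pow _ n)).
Qed.

Lemma dpl_sqrt f f' u :
  derivable_pt_lim f u f' -> 0 < f u ->
  derivable_pt_lim (fun y => sqrt (f y)) u (f' / (2 * sqrt (f u))).
Proof.
  intros Hf Hpos. assert (Hsqrt := sqrt_lt_R0 _ Hpos).
  apply (dpl_eq _ _ (/ (2 * sqrt (f u)) * f')); [field; lra |].
  exact (derivable_pt_lim_comp f sqrt u f' _ Hf (derivable_pt_lim_sqrt _ Hpos)).
Qed.

Lemma nth_deriv_of_seq (D : nat -> R -> R) :
  (forall k u, derivable_pt_lim (D k) u (D (S k) u)) ->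
  forall n k, nth_deriv n (D k) (D (k + n)%nat).
Proof.
  intros HD n. induction n as [|n IH]; intros k.
  - rewrite Nat.add_0_r. constructor.
  - apply nth_deriv_S with (D (S k)); [apply HD |].
    replace (k + S n)%nat with (S k + n)%nat by lia. apply IH.
Qed.

Lemma nth_deriv_unique n f g h : nth_deriv n f g -> nth_deriv n f h -> g = h.
Proof.
  intros Hg. revert h.
  induction Hg as [f | n f f1 g Hf1 _ IH]; intros h Hh; inversion Hh as [| n' f' f2 h' Hf2 Hh2]; subst.
  - reflexivity.
  - apply IH. replace f1 with f2; [exact Hh2 |].
    apply functional_extensionality; intros u. exact (uniqueness_limite f u _ _ (Hf2 u) (Hf1 u)).
Qed.

Lemma zero_derivative_constant f :
  (forall u, derivable_pt_lim f u 0) -> forall u v, f u = f v.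
Proof.
  intros H. apply (null_derivative_1 f (fun u => exist _ 0 (H u))). reflexivity.
Qed.

Lemma dfact_rec n : (1 <= n)%nat -> dfact n = (n * dfact (n - 2))%nat.
Proof.
  intros Hn. destruct n as [|[|m]]; [lia | reflexivity |].
  replace (S (S m) - 2)%nat with m by lia. reflexivity.
Qed.

Lemma dfact_pos n : (0 < dfact n)%nat.
Proof.
  enough (H : forall n, (0 < dfact n)%nat /\ (0 < dfact (S n))%nat) by apply H.
  intros m. induction m as [|m [IH0 IH1]]; [simpl; lia |].
  split; [exact IH1 |]. change (dfact (S (S m))) with (S (S m) * dfact m)%nat. lia.
Qed.

(* w u = sqrt (1 + u^2), the function cosh x of the variable u = sinh x. *)
Definition w (u : R) : R := sqrt (1 + u ^ 2).

Lemma w_pos u : 0 < w u.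
Proof. apply sqrt_lt_R0. nra. Qed.

Lemma w_sq u : w u ^ 2 = 1 + u ^ 2.
Proof. unfold w. rewrite <- Rsqr_pow2, Rsqr_sqrt; nra. Qed.

Lemma w_0 : w 0 = 1.
Proof. unfold w. replace (1 + 0 ^ 2) with 1 by ring. apply sqrt_1. Qed.

Lemma w_sinh x : w (sinh x) = cosh x.
Proof.
  assert (Hcosh : 0 < cosh x).
  { unfold cosh. generalize (exp_pos x) (exp_pos (- x)). lra. }
  assert (Hsq : 1 + sinh x ^ 2 = cosh x ^ 2).
  { unfold cosh, sinh. rewrite exp_Ropp. generalize (exp_pos x). intros. field. lra. }
  unfold w. rewrite Hsq. apply sqrt_pow2. lra.
Qed.

Lemma w_deriv u : derivable_pt_lim w u (u / w u).
Proof.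
  assert (Hw := w_pos u).
  eapply dpl_eq; [| apply dpl_sqrt; [apply dpl_plus; [apply derivable_pt_lim_const |
      apply (dpl_pow (fun y => y)), derivable_pt_lim_id] | nra]].
  cbv beta. change (sqrt (1 + u ^ 2)) with (w u). change (INR 2) with 2. simpl pred. field. lra.
Qed.

(* For a real parameter m, [cheb_next k a b] is the value of y^(k+2) forced by
   the k-th derivative of (1 + u^2) y'' + u y' - m^2 y = 0, when a = y^(k) and
   b = y^(k+1). *)
Section DifferentiatedEquation.
Variable m : R.

Definition cheb_next (k : nat) (a b : R -> R) (u : R) : R :=
  ((m ^ 2 - INR k ^ 2) * a u - (2 * INR k + 1) * u * b u) / (1 + u ^ 2).

(* Differentiating the k-th derived equation gives the (k+1)-th one. *)
Lemma cheb_next_deriv k a b :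
  (forall u, derivable_pt_lim a u (b u)) ->
  (forall u, derivable_pt_lim b u (cheb_next k a b u)) ->
  forall u, derivable_pt_lim (cheb_next k a b) u (cheb_next (S k) b (cheb_next k a b) u).
Proof.
  intros Ha Hb u. unfold cheb_next at 1.
  eapply dpl_eq; [| apply dpl_div; [apply dpl_minus |
      apply dpl_plus; [apply derivable_pt_lim_const | apply (dpl_pow (fun y => y)), derivable_pt_lim_id] | nra]].
  2: apply dpl_mult; [apply derivable_pt_lim_const | apply Ha].
  2: apply dpl_mult; [apply dpl_mult; [apply derivable_pt_lim_const | apply derivable_pt_lim_id] | apply Hb].
  cbv beta. unfold cheb_next. rewrite (S_INR k). change (INR 2) with 2. simpl pred. field. nra.
Qed.
End DifferentiatedEquation.

(* The function F u = (w u + s u)^r, i.e. exp (s r x) as a function of u = sinh x. *)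
Section PowerOfExponential.
Variables (r : nat) (s : R).
Hypothesis s_sign : s = 1 \/ s = -1.
Hypothesis r_pos : (1 <= r)%nat.

Lemma s_sq : s * s = 1.
Proof. destruct s_sign as [-> | ->]; ring. Qed.

Definition F (u : R) : R := (w u + s * u) ^ r.

(* D k is the k-th derivative of F (proved in [D_deriv]): the first two are
   computed by hand, the others by the differentiated equation with m = r. *)
Fixpoint D (k : nat) : R -> R :=
  match k with
  | O => F
  | S O => fun u => INR r * s * F u / w u
  | S (S j as k1) => cheb_next (INR r) j (D j) (D k1)
  end.

(* F' = r s F / w, using w' = u / w and s^2 = 1. *)
Lemma F_deriv u : derivable_pt_lim (D 0) u (D 1 u).
Proof.
  assert (Hw := w_pos u).
  eapply dpl_eq; [| apply dpl_pow, dpl_plus;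
      [apply w_deriv | apply dpl_mult; [apply derivable_pt_lim_const | apply derivable_pt_lim_id]]].
  simpl D. unfold F. destruct r as [|r']; [lia |]. simpl pred. rewrite <- tech_pow_Rmult.
  replace (u / w u + (0 * u + s * 1)) with (s * (w u + s * u) / w u).
  - field. lra.
  - rewrite Rmult_plus_distr_l, <- Rmult_assoc, s_sq. field. lra.
Qed.

(* F solves (1 + u^2) F'' + u F' - r^2 F = 0. *)
Lemma F_equation u : derivable_pt_lim (D 1) u (D 2 u).
Proof.
  assert (Hw := w_pos u).
  eapply dpl_eq; [| apply dpl_div; [apply dpl_mult; [apply derivable_pt_lim_const | apply F_deriv] |
      apply w_deriv | lra]].
  cbv beta. simpl D. unfold cheb_next. rewrite <- w_sq. simpl D.
  change (INR 0) with 0. destruct s_sign as [-> | ->]; field; lra.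
Qed.

Lemma D_deriv k u : derivable_pt_lim (D k) u (D (S k) u).
Proof.
  assert (Hpair : forall k, (forall u, derivable_pt_lim (D k) u (D (S k) u)) /\
                            (forall u, derivable_pt_lim (D (S k)) u (D (S (S k)) u))).
  { intros j. induction j as [|j [IH0 IH1]].
    - split; [apply F_deriv | apply F_equation].
    - split; [exact IH1 | apply (cheb_next_deriv (INR r) j); assumption]. }
  apply Hpair.
Qed.

(* For k = r the recurrence makes D (r+1) * w^(2r+1) constant. *)
Lemma top_deriv_invariant u : D (S r) u * w u ^ (2 * r + 1) = D (S r) 0.
Proof.
  rewrite <- (Rmult_1_r (D (S r) 0)), <- (pow1 (2 * r + 1)), <- w_0.
  apply (zero_derivative_constant (fun u => D (S r) u * w u ^ (2 * r + 1))). clear u. intros u.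
  assert (Hw := w_pos u).
  eapply dpl_eq; [| apply dpl_mult; [apply D_deriv | apply dpl_pow, w_deriv]].
  change (D (S (S r)) u) with (cheb_next (INR r) r (D r) (D (S r)) u). unfold cheb_next.
  replace (2 * r + 1)%nat with (S (2 * r)) by lia. set (N := (2 * r)%nat).
  assert (HN : INR (S N) = 2 * INR r + 1) by (unfold N; rewrite S_INR, mult_INR; simpl; ring).
  rewrite HN, <- w_sq. change (pred (S N)) with N. rewrite <- (tech_pow_Rmult (w u) N).
  field. lra.
Qed.

Lemma F_0 : F 0 = 1.
Proof. unfold F. rewrite w_0, Rmult_0_r, Rplus_0_r. apply pow1. Qed.

(* Values at 0: D (k+2) 0 = (r-k)(r+k) D k 0, so for k <= r+1,
   D k 0 = s^k r (r+k-2)!! / (r-k)!!. *)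
Lemma D_at_zero k : (k <= S r)%nat ->
  D k 0 * INR (dfact (r - k)) = s ^ k * INR r * INR (dfact (r + k - 2)).
Proof.
  revert k. pose (Q j := (j <= S r)%nat ->
    D j 0 * INR (dfact (r - j)) = s ^ j * INR r * INR (dfact (r + j - 2))).
  assert (Hpair : forall j, Q j /\ Q (S j)).
  { intros j. induction j as [|k [IH0 IH1]]; unfold Q in *.
    - split; intros _; simpl D; rewrite F_0.
      + rewrite Nat.sub_0_r, Nat.add_0_r, (dfact_rec r), mult_INR by lia. ring.
      + rewrite w_0. replace (r + 1 - 2)%nat with (r - 1)%nat by lia. field.
    - split; [exact IH1 |]. intros Hk. specialize (IH0 ltac:(lia)).
      rewrite (dfact_rec (r - k)), mult_INR, minus_INR in IH0 by lia.
      replace (r - k - 2)%nat with (r - S (S k))%nat in IH0 by lia.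
      replace (r + S (S k) - 2)%nat with (r + k)%nat by lia.
      rewrite (dfact_rec (r + k)), mult_INR, plus_INR by lia.
      change (D (S (S k)) 0) with (cheb_next (INR r) k (D k) (D (S k)) 0). unfold cheb_next.
      transitivity ((INR r + INR k) * (D k 0 * ((INR r - INR k) * INR (dfact (r - S (S k)))))).
      + field.
      + rewrite IH0. simpl pow. rewrite <- (Rmult_assoc s s), s_sq. ring. }
  intros k. apply Hpair.
Qed.

Lemma top_deriv_at_zero : D (S r) 0 = s ^ S r * INR r * INR (dfact (2 * r - 1)).
Proof.
  replace (2 * r - 1)%nat with (r + S r - 2)%nat by lia.
  rewrite <- (D_at_zero (S r)) by lia.
  replace (r - S r)%nat with 0%nat by lia. simpl. ring.
Qed.
End PowerOfExponential.

(* g must be D (r+1); evaluate the invariant at u = sinh x and use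
   D (r+1) 0 = s^(r+1) r (2r-1)!! together with (s^(r+1))^2 = 1. *)
Theorem mainTheorem9 (r : nat) (s : R) :
  (1 <= r)%nat -> (s = 1 \/ s = -1) ->
  (exists g, nth_deriv (S r) (fun u => (sqrt (1 + u ^ 2) + s * u) ^ r) g) /\
  (forall g, nth_deriv (S r) (fun u => (sqrt (1 + u ^ 2) + s * u) ^ r) g ->
     forall x : R,
       sech x ^ (2 * r + 1) =
       s ^ (S r) / (INR r * INR (dfact (2 * r - 1))) * g (sinh x)).
Proof.
  intros Hr Hs.
  pose proof (nth_deriv_of_seq (D r s) (D_deriv r s Hs Hr) (S r) 0) as HD.
  change (fun u => (sqrt (1 + u ^ 2) + s * u) ^ r) with (D r s 0).
  split; [eexists; exact HD |].
  intros g Hg x. rewrite (nth_deriv_unique _ _ _ _ Hg HD).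
  pose proof (top_deriv_invariant r s Hs Hr (sinh x)) as Hinv.
  rewrite w_sinh, top_deriv_at_zero in Hinv by assumption.
  assert (Hcosh : 0 < cosh x) by (rewrite <- w_sinh; apply w_pos).
  assert (Hr0 : 0 < INR r) by (apply lt_0_INR; lia).
  assert (Hd : 0 < INR (dfact (2 * r - 1))) by (apply lt_0_INR, dfact_pos).
  assert (Hss : s ^ S r * s ^ S r = 1) by (rewrite <- Rpow_mult_distr, (s_sq s Hs), pow1; reflexivity).
  assert (Hc : 0 < cosh x ^ (2 * r + 1)) by (apply pow_lt; exact Hcosh).
  unfold sech. rewrite pow_inv. simpl (0 + S r)%nat.
  apply (Rmult_eq_reg_r (cosh x ^ (2 * r + 1))); [| lra].
  rewrite Rmult_assoc, Hinv, Rinv_l by lra.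
  rewrite <- Hss at 1. field. lra.
Qed.
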